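(* Let $\mathbb{T}=\mathbb{R}/2\pi\mathbb{Z}$, let $(a_k)_{k\ge1},(b_k)_{k\ge1}$ be independent stationary centered Gaussian sequences with common correlation function $\rho$ ($\mathbb{E}[a_ka_l]=\mathbb{E}[b_kb_l]=\rho(k-l)$), whose spectral measure $\mu$ (defined by $\rho(k)=\frac1{2\pi}\int_{\mathbb{T}}e^{-iku}d\mu(u)$) has a continuous positive density $\psi$ with respect to Lebesgue measure on $\mathbb{T}$. Let $X_n(s)=\frac{1}{\sqrt n}\sum_{k=1}^n(a_k\cos(ks)+b_k\sin(ks))$ and $r_n(s,t)=\mathbb{E}[X_n(s)X_n(t)]$. Let $a,b\in\{0,1,2,3,4\}$. Then, uniformly for $s\in\mathbb{T}$ and $u,v$ in any compact subset of $\mathbb{R}$, \[\lim_{n\to+\infty}\frac{1}{n^{a+b}}\,r_n^{(a,b)}\Big(s+\frac un,s+\frac vn\Big)=\psi(s)(-1)^b\,\mathrm{sinc}^{(a+b)}(u-v).\]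
   Context: $r_n^{(a,b)}=\partial_1^a\partial_2^b r_n$; $\mathrm{sinc}(x)=\sin x/x$ and $\mathrm{sinc}^{(m)}$ is its $m$-th derivative. *)

From Stdlib Require Import Reals ZArith.
From Coquelicot Require Import Coquelicot.
Open Scope R_scope.

Definition sinc (x : R) : R := if Req_EM_T x 0 then 1 else sin x / x.

(* r_n(s,t) = E[X_n(s) X_n(t)] for X_n(s) = n^{-1/2} sum_{k=1}^n (a_k cos(ks) + b_k sin(ks)),
   with (a_k),(b_k) independent centred, E[a_k a_l] = E[b_k b_l] = rho(k-l):
   E[X_n(s)X_n(t)] = 1/n sum_{k,l=1}^n rho(k-l) (cos(ks)cos(lt) + sin(ks)sin(lt)). *)
Definition rn (rho : Z -> R) (n : nat) (s t : R) : R :=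
  / INR n *
  sum_n_m (fun k =>
    sum_n_m (fun l =>
      rho (Z.of_nat k - Z.of_nat l)%Z *
      (cos (INR k * s) * cos (INR l * t) + sin (INR k * s) * sin (INR l * t)))
    1 n) 1 n.

Definition rn_deriv (rho : Z -> R) (n a b : nat) (s t : R) : R :=
  Derive_n (fun x => Derive_n (fun y => rn rho n x y) b t) a s.

(* psi is a continuous positive density on T = R/2piZ (a 2pi-periodic function on R)
   of the spectral measure of rho:
   rho(k) = 1/(2pi) int_T e^{-iku} psi(u) du, split into real and imaginary parts. *)
Definition spectral_density (rho : Z -> R) (psi : R -> R) : Prop :=
  (forall x, continuous psi x) /\
  (forall x, psi (x + 2 * PI) = psi x) /\
  (forall x, 0 < psi x) /\
  (forall k : Z,
     rho k = / (2 * PI) * RInt (fun u => cos (IZR k * u) * psi u) 0 (2 * PI) /\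
     RInt (fun u => sin (IZR k * u) * psi u) 0 (2 * PI) = 0).

(* Expanding the covariance as a double trigonometric sum and inserting the spectral
   representation of rho gives
     n^-(a+b) r_n^(a,b)(s + u/n, s + v/n) = (2 pi n^(a+b+1))^-1 int_T psi(x) K_n(x) dx,
   with K_n(x) = sum_(k,l <= n) k^a l^b cos(k(s + u/n - x) - l(s + v/n - x) + (a - b) pi/2).
   Freezing psi at s kills the off-diagonal terms, and the diagonal is a Riemann sum of
   int_0^1 t^(a+b) cos(t(u - v) + (a - b) pi/2) dt = (-1)^b sinc^(a+b)(u - v).
   The error is controlled by |psi(x) - psi(s)| <= eps + K sin^2((x - s)/2): the eps part
   through |K_n| <= |P_a| |P_b| with P_a(y) = sum_k k^a e^(iky) and Parseval, the sin^2 part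
   through Abel summation, which gives |sin(y/2) P_a(y)| <= n^a. *)

From Stdlib Require Import Reals ZArith Lra Lia.
From Coquelicot Require Import Coquelicot.
Open Scope R_scope.

(* A plain-[R] form of Coquelicot's [sum_n_m f 1 n], convenient for [ring] and termwise
   integration. *)
Fixpoint sum1 (n : nat) (f : nat -> R) : R :=
  match n with O => 0 | S m => sum1 m f + f n end.

Lemma sum_n_m_sum1 (f : nat -> R) n : sum_n_m f 1 n = sum1 n f.
Proof.
  induction n as [|n IH].
  - rewrite sum_n_m_zero; [reflexivity | lia].
  - destruct n as [|n].
    + rewrite sum_n_n. simpl. ring.
    + rewrite sum_n_Sm by lia. rewrite IH. reflexivity.
Qed.

Lemma sum1_ext_in n f g :
  (forall k, (1 <= k <= n)%nat -> f k = g k) -> sum1 n f = sum1 n g.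
Proof.
  intros H; induction n as [|n IH]; simpl; [reflexivity|].
  rewrite IH, H by (intros; try apply H; lia). reflexivity.
Qed.

Lemma sum1_ext n f g : (forall k, f k = g k) -> sum1 n f = sum1 n g.
Proof. intros H; apply sum1_ext_in; auto. Qed.

Lemma sum1_plus n f g : sum1 n (fun k => f k + g k) = sum1 n f + sum1 n g.
Proof. induction n as [|n IH]; simpl; [ring | rewrite IH; ring]. Qed.

Lemma sum1_minus n f g : sum1 n (fun k => f k - g k) = sum1 n f - sum1 n g.
Proof. induction n as [|n IH]; simpl; [ring | rewrite IH; ring]. Qed.

Lemma sum1_scal n c f : sum1 n (fun k => c * f k) = c * sum1 n f.
Proof. induction n as [|n IH]; simpl; [ring | rewrite IH; ring]. Qed.

Lemma sum1_mul n p q : sum1 n (fun k => sum1 n (fun l => p k * q l)) = sum1 n p * sum1 n q.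
Proof.
  rewrite Rmult_comm, <- sum1_scal. apply sum1_ext; intro k.
  rewrite sum1_scal. ring.
Qed.

Lemma Rabs_sum1_le n f : Rabs (sum1 n f) <= sum1 n (fun k => Rabs (f k)).
Proof.
  induction n as [|n IH]; simpl.
  - rewrite Rabs_R0; lra.
  - eapply Rle_trans; [apply Rabs_triang | lra].
Qed.

Lemma sum1_le_const n f c :
  (forall k, (1 <= k <= n)%nat -> f k <= c) -> sum1 n f <= INR n * c.
Proof.
  intros H; induction n as [|n IH]; cbn [sum1]; [simpl; lra|].
  assert (sum1 n f <= INR n * c) by (apply IH; intros; apply H; lia).
  assert (f (S n) <= c) by (apply H; lia).
  rewrite S_INR. lra.
Qed.

Lemma sum1_delta n k c :
  (1 <= k <= n)%nat -> sum1 n (fun l => if Nat.eqb k l then c else 0) = c.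
Proof.
  assert (Hout : forall m, (m < k)%nat -> sum1 m (fun l => if Nat.eqb k l then c else 0) = 0).
  { intros m; induction m as [|m IH]; intros H; simpl; [reflexivity|].
    rewrite IH by lia. destruct (Nat.eqb_spec k (S m)); [lia | ring]. }
  induction n as [|n IH]; intros H; [lia|]. cbn [sum1].
  destruct (Nat.eqb_spec k (S n)) as [->|Hk].
  - rewrite Hout by lia. ring.
  - rewrite IH by lia. ring.
Qed.

Lemma is_derive_sum1 n (g : nat -> R -> R) (g' : nat -> R) y :
  (forall k, is_derive (g k) y (g' k)) ->
  is_derive (fun y => sum1 n (fun k => g k y)) y (sum1 n g').
Proof.
  intros H; induction n as [|n IH]; simpl.
  - apply (is_derive_const 0 y).
  - apply (is_derive_plus (fun y => sum1 n (fun k => g k y)) (g (S n))); auto.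
Qed.

Lemma continuous_sum1 n (g : nat -> R -> R) x :
  (forall k, continuous (g k) x) -> continuous (fun x => sum1 n (fun k => g k x)) x.
Proof.
  intros H; induction n as [|n IH]; simpl.
  - apply continuous_const.
  - apply (continuous_plus (fun x => sum1 n (fun k => g k x)) (g (S n))); auto.
Qed.

Lemma RInt_scal_R (f : R -> R) c a b : ex_RInt f a b ->
  RInt (fun x => c * f x) a b = c * RInt f a b.
Proof. exact (RInt_scal f a b c). Qed.

Lemma RInt_lin_comb (f g : R -> R) c1 c2 a b : ex_RInt f a b -> ex_RInt g a b ->
  RInt (fun x => c1 * f x + c2 * g x) a b = c1 * RInt f a b + c2 * RInt g a b.
Proof.
  intros Hf Hg.
  rewrite (RInt_plus (fun x => c1 * f x) (fun x => c2 * g x)).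
  - rewrite <- !RInt_scal_R by assumption. reflexivity.
  - apply (ex_RInt_scal f a b c1 Hf).
  - apply (ex_RInt_scal g a b c2 Hg).
Qed.

Lemma ex_RInt_continuous_R (f : R -> R) a b : (forall x, continuous f x) -> ex_RInt f a b.
Proof. intros H. apply (@ex_RInt_continuous R_CompleteNormedModule); auto. Qed.

Lemma RInt_sum1 n (f : nat -> R -> R) a b :
  (forall k x, continuous (f k) x) ->
  RInt (fun x => sum1 n (fun k => f k x)) a b = sum1 n (fun k => RInt (f k) a b).
Proof.
  intros H; induction n as [|n IH]; simpl.
  - rewrite RInt_const. unfold scal; simpl; unfold mult; simpl. ring.
  - rewrite <- IH. apply (RInt_plus (fun x => sum1 n (fun k => f k x)) (f (S n))).
    + apply ex_RInt_continuous_R. intro x. apply (continuous_sum1 n f). auto.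
    + apply ex_RInt_continuous_R, H.
Qed.

Lemma RInt_sum1_sum1 n (f : nat -> nat -> R -> R) a b :
  (forall k l x, continuous (f k l) x) ->
  RInt (fun x => sum1 n (fun k => sum1 n (fun l => f k l x))) a b =
  sum1 n (fun k => sum1 n (fun l => RInt (f k l) a b)).
Proof.
  intros H. rewrite (RInt_sum1 n (fun k x => sum1 n (fun l => f k l x))).
  - apply sum1_ext; intro k. apply RInt_sum1, H.
  - intros k x. apply (continuous_sum1 n (f k)). auto.
Qed.

(** * Double trigonometric sums *)

Definition cos_bisum n (c : nat -> nat -> R) x y ph :=
  sum1 n (fun k => sum1 n (fun l => c k l * cos (INR k * x - INR l * y + ph))).

Lemma cos_bisum_ext n c c' x y ph ph' :
  (forall k l, c k l = c' k l) -> ph = ph' -> cos_bisum n c x y ph = cos_bisum n c' x y ph'.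
Proof.
  intros H ->. unfold cos_bisum.
  apply sum1_ext; intro k; apply sum1_ext; intro l. rewrite H. reflexivity.
Qed.

Lemma is_derive_cos_bisum_r n c x y ph :
  is_derive (fun y => cos_bisum n c x y ph) y
    (cos_bisum n (fun k l => c k l * INR l) x y (ph - PI / 2)).
Proof.
  apply is_derive_sum1; intro k. apply is_derive_sum1; intro l.
  auto_derive; [exact I|].
  replace (INR k * x - INR l * y + (ph - PI / 2))
    with ((INR k * x - INR l * y + ph) - PI / 2) by ring.
  rewrite cos_minus, cos_PI2, sin_PI2. unfold Rminus. ring.
Qed.

Lemma is_derive_cos_bisum_l n c x y ph :
  is_derive (fun x => cos_bisum n c x y ph) x
    (cos_bisum n (fun k l => c k l * INR k) x y (ph + PI / 2)).
Proof.
  apply is_derive_sum1; intro k. apply is_derive_sum1; intro l.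
  auto_derive; [exact I|].
  replace (INR k * x - INR l * y + (ph + PI / 2))
    with ((INR k * x - INR l * y + ph) + PI / 2) by ring.
  rewrite cos_plus, cos_PI2, sin_PI2. unfold Rminus. ring.
Qed.

Lemma Derive_n_cos_bisum_r n c x ph b y :
  Derive_n (fun y => cos_bisum n c x y ph) b y =
  cos_bisum n (fun k l => c k l * INR l ^ b) x y (ph - INR b * (PI / 2)).
Proof.
  revert y; induction b as [|b IH]; intro y; simpl Derive_n.
  - apply cos_bisum_ext; [intros; ring | simpl; ring].
  - rewrite (Derive_ext _ _ _ IH), (is_derive_unique _ _ _ (is_derive_cos_bisum_r _ _ _ _ _)).
    apply cos_bisum_ext; [intros; simpl; ring | rewrite S_INR; ring].
Qed.

Lemma Derive_n_cos_bisum_l n c y ph a x :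
  Derive_n (fun x => cos_bisum n c x y ph) a x =
  cos_bisum n (fun k l => c k l * INR k ^ a) x y (ph + INR a * (PI / 2)).
Proof.
  revert x; induction a as [|a IH]; intro x; simpl Derive_n.
  - apply cos_bisum_ext; [intros; ring | simpl; ring].
  - rewrite (Derive_ext _ _ _ IH), (is_derive_unique _ _ _ (is_derive_cos_bisum_l _ _ _ _ _)).
    apply cos_bisum_ext; [intros; simpl; ring | rewrite S_INR; ring].
Qed.

Lemma rn_cos_bisum rho n s t :
  rn rho n s t = / INR n * cos_bisum n (fun k l => rho (Z.of_nat k - Z.of_nat l)%Z) s t 0.
Proof.
  unfold rn, cos_bisum. f_equal. rewrite sum_n_m_sum1. apply sum1_ext; intro k.
  rewrite sum_n_m_sum1. apply sum1_ext; intro l.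
  rewrite Rplus_0_r, cos_minus. reflexivity.
Qed.

Lemma rn_deriv_cos_bisum rho n a b s t :
  rn_deriv rho n a b s t =
  / INR n * cos_bisum n (fun k l => rho (Z.of_nat k - Z.of_nat l)%Z * (INR k ^ a * INR l ^ b))
              s t (INR a * (PI / 2) - INR b * (PI / 2)).
Proof.
  unfold rn_deriv.
  rewrite (Derive_n_ext _ (fun x => / INR n * cos_bisum n
     (fun k l => rho (Z.of_nat k - Z.of_nat l)%Z * INR l ^ b) x t (0 - INR b * (PI / 2)))).
  - rewrite Derive_n_scal_l, Derive_n_cos_bisum_l.
    f_equal. apply cos_bisum_ext; [intros; ring | ring].
  - intro x. rewrite (Derive_n_ext _ _ _ _ (rn_cos_bisum rho n x)).
    rewrite Derive_n_scal_l, Derive_n_cos_bisum_r. reflexivity.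
Qed.

Lemma continuous_cos_affine k l s t ph x :
  continuous (fun x => cos (INR k * (s - x) - INR l * (t - x) + ph)) x.
Proof. apply (@ex_derive_continuous R_AbsRing R_NormedModule). auto_derive. exact I. Qed.

Lemma continuous_cos_bisum_shift n c s t ph x :
  continuous (fun x => cos_bisum n c (s - x) (t - x) ph) x.
Proof.
  apply (continuous_sum1 n (fun k x => sum1 n (fun l =>
           c k l * cos (INR k * (s - x) - INR l * (t - x) + ph)))); intro k.
  apply (continuous_sum1 n (fun l x => c k l * cos (INR k * (s - x) - INR l * (t - x) + ph)));
    intro l.
  apply (continuous_mult (fun _ => c k l)); [apply continuous_const | apply continuous_cos_affine].
Qed.

Lemma RInt_psi_cos_affine rho psi k l s t ph : spectral_density rho psi ->
  RInt (fun x => psi x * cos (INR k * (s - x) - INR l * (t - x) + ph)) 0 (2 * PI) =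
  2 * PI * (rho (Z.of_nat k - Z.of_nat l)%Z * cos (INR k * s - INR l * t + ph)).
Proof.
  intros [Hc [_ [_ Hrho]]].
  set (j := (Z.of_nat k - Z.of_nat l)%Z). destruct (Hrho j) as [Hcos Hsin].
  set (A := INR k * s - INR l * t + ph).
  assert (Hj : IZR j = INR k - INR l) by (unfold j; rewrite minus_IZR, <- !INR_IZR_INZ; ring).
  rewrite (RInt_ext _ (fun x => cos A * (cos (IZR j * x) * psi x)
                                + sin A * (sin (IZR j * x) * psi x))).
  - assert (Htrig : forall trig, (forall x, continuous trig x) ->
                    ex_RInt (fun x => trig (IZR j * x) * psi x) 0 (2 * PI)).
    { intros trig Htrig. apply ex_RInt_continuous_R. intro x.
      apply (continuous_mult (fun x => trig (IZR j * x))); [|apply Hc].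
      apply (continuous_comp (fun x => IZR j * x)); [|apply Htrig].
      apply (@ex_derive_continuous R_AbsRing R_NormedModule). auto_derive. exact I. }
    rewrite RInt_lin_comb, Hsin, Hcos.
    + simpl. pose proof PI_RGT_0. field. lra.
    + apply Htrig. intro x. apply continuous_cos.
    + apply Htrig. intro x. apply continuous_sin.
  - intros x _. rewrite Hj.
    replace (INR k * (s - x) - INR l * (t - x) + ph) with (A - (INR k - INR l) * x)
      by (unfold A; ring).
    rewrite cos_minus. simpl. ring.
Qed.

Lemma RInt_psi_cos_bisum rho psi n c s t ph : spectral_density rho psi ->
  RInt (fun x => psi x * cos_bisum n c (s - x) (t - x) ph) 0 (2 * PI) =
  2 * PI * cos_bisum n (fun k l => rho (Z.of_nat k - Z.of_nat l)%Z * c k l) s t ph.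
Proof.
  intros Hs. assert (Hc : forall x, continuous psi x) by apply Hs.
  unfold cos_bisum.
  rewrite (RInt_ext _ (fun x => sum1 n (fun k => sum1 n (fun l =>
             c k l * (psi x * cos (INR k * (s - x) - INR l * (t - x) + ph)))))).
  - rewrite RInt_sum1_sum1.
    + rewrite <- sum1_scal. apply sum1_ext; intro k.
      rewrite <- sum1_scal. apply sum1_ext; intro l.
      rewrite RInt_scal_R, (RInt_psi_cos_affine rho psi _ _ _ _ _ Hs); [ring|].
      apply ex_RInt_continuous_R; intro x.
      apply (continuous_mult psi); [apply Hc | apply continuous_cos_affine].
    + intros k l x. apply (continuous_mult (fun _ => c k l)); [apply continuous_const|].
      apply (continuous_mult psi); [apply Hc | apply continuous_cos_affine].
  - intros x _. rewrite <- sum1_scal. apply sum1_ext; intro k.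
    rewrite <- sum1_scal. apply sum1_ext; intro l. ring.
Qed.

Lemma RInt_cos_affine k l s t ph :
  RInt (fun x => cos (INR k * (s - x) - INR l * (t - x) + ph)) 0 (2 * PI) =
  if Nat.eqb k l then 2 * PI * cos (INR k * (s - t) + ph) else 0.
Proof.
  destruct (Nat.eqb_spec k l) as [<-|Hkl].
  - rewrite (RInt_ext _ (fun _ => cos (INR k * (s - t) + ph))).
    + rewrite RInt_const. unfold scal; simpl; unfold mult; simpl. ring.
    + intros x _. f_equal. ring.
  - set (j := INR k - INR l). set (A := INR k * s - INR l * t + ph).
    assert (Hj : j <> 0) by (unfold j; intro E; apply Hkl, INR_eq; lra).
    assert (Hperiod : sin (A - j * (2 * PI)) = sin A).
    { rewrite <- (sin_period (A - j * (2 * PI)) k).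
      replace (A - j * (2 * PI) + 2 * INR k * PI) with (A + 2 * INR l * PI) by (unfold j; ring).
      apply sin_period. }
    rewrite (is_RInt_unique _ 0 (2 * PI)
               (minus (- sin (A - j * (2 * PI)) / j) (- sin (A - j * 0) / j))).
    + rewrite Hperiod, Rmult_0_r, Rminus_0_r. unfold minus, plus, opp; simpl. ring.
    + apply (is_RInt_derive (fun x => - sin (A - j * x) / j)).
      * intros x _. auto_derive; [exact I|].
        replace (INR k * (s - x) - INR l * (t - x) + ph) with (A + - (j * x))
          by (unfold A, j; ring).
        field. exact Hj.
      * intros x _. apply continuous_cos_affine.
Qed.

Lemma RInt_cos_bisum n c s t ph :
  RInt (fun x => cos_bisum n c (s - x) (t - x) ph) 0 (2 * PI) =
  2 * PI * sum1 n (fun k => c k k * cos (INR k * (s - t) + ph)).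
Proof.
  unfold cos_bisum. rewrite RInt_sum1_sum1.
  - rewrite <- sum1_scal. apply sum1_ext_in; intros k Hk.
    rewrite (sum1_ext _ _ (fun l =>
               if Nat.eqb k l then 2 * PI * (c k k * cos (INR k * (s - t) + ph)) else 0)).
    + apply sum1_delta. exact Hk.
    + intro l. rewrite RInt_scal_R, RInt_cos_affine.
      * destruct (Nat.eqb_spec k l) as [<-|]; ring.
      * apply ex_RInt_continuous_R, continuous_cos_affine.
  - intros k l x. apply (continuous_mult (fun _ => c k l));
      [apply continuous_const | apply continuous_cos_affine].
Qed.

(** * Power sums and Abel summation *)

Lemma Rabs_sin_le_1 x : Rabs (sin x) <= 1.
Proof. pose proof (SIN_bound x). apply Rabs_le; lra. Qed.

Lemma Rabs_cos_le_1 x : Rabs (cos x) <= 1.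
Proof. pose proof (COS_bound x). apply Rabs_le; lra. Qed.

Lemma Rabs_sin_le x : Rabs (sin x) <= Rabs x.
Proof.
  destruct (MVT_gen sin 0 x cos) as [c [_ Hc]].
  - intros; apply is_derive_sin.
  - intros; apply continuity_sin.
  - rewrite sin_0, Rminus_0_r, Rminus_0_r in Hc. rewrite Hc, Rabs_mult.
    pose proof (Rabs_cos_le_1 c). pose proof (Rabs_pos x). nra.
Qed.

Lemma Rabs_sin_sub_le p q : Rabs (sin (p - q)) <= Rabs (sin p) + Rabs (sin q).
Proof.
  rewrite sin_minus. eapply Rle_trans; [apply Rabs_triang|].
  rewrite Rabs_Ropp, !Rabs_mult.
  pose proof (Rabs_cos_le_1 p). pose proof (Rabs_cos_le_1 q).
  pose proof (Rabs_pos (sin p)). pose proof (Rabs_pos (sin q)). nra.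
Qed.

Definition cos_powsum n a y c := sum1 n (fun k => INR k ^ a * cos (INR k * y + c)).

(* |sum_k k^a e^{iky}|^2, since cos (t - PI/2) = sin t. *)
Definition powsum_norm2 n a y := cos_powsum n a y 0 ^ 2 + cos_powsum n a y (- (PI / 2)) ^ 2.

Lemma Rabs_cos_powsum_le n a y c : Rabs (cos_powsum n a y c) <= INR n * INR n ^ a.
Proof.
  unfold cos_powsum. eapply Rle_trans; [apply Rabs_sum1_le|]. apply sum1_le_const.
  intros k Hk. rewrite Rabs_mult, Rabs_pos_eq by (apply pow_le, pos_INR).
  assert (INR k ^ a <= INR n ^ a) by (apply pow_incr; split; [apply pos_INR | apply le_INR; lia]).
  pose proof (Rabs_cos_le_1 (INR k * y + c)). pose proof (pow_le (INR k) a (pos_INR k)).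
  pose proof (Rabs_pos (cos (INR k * y + c))). nra.
Qed.

(* Summation by parts against 2 sin(y/2) cos(ky + c) = sin((k+1/2)y + c) - sin((k-1/2)y + c). *)
Lemma cos_powsum_abel n a y c :
  Rabs (2 * sin (y / 2) * cos_powsum n a y c - INR n ^ a * sin ((INR n + / 2) * y + c))
  <= INR n ^ a.
Proof.
  induction n as [|n IH].
  - unfold cos_powsum; simpl sum1; simpl INR.
    rewrite Rmult_0_r, Rminus_0_l, Rabs_Ropp, Rabs_mult, (Rabs_pos_eq (0 ^ a))
      by (apply pow_le; lra).
    pose proof (Rabs_sin_le_1 ((0 + / 2) * y + c)). pose proof (pow_le 0 a (Rle_refl 0)). nra.
  - unfold cos_powsum in *; cbn [sum1]. rewrite S_INR.
    set (P := sin ((INR n + / 2) * y + c)) in *.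
    set (Q := sin ((INR n + 1 + / 2) * y + c)).
    set (E := 2 * sin (y / 2) * sum1 n (fun k => INR k ^ a * cos (INR k * y + c)) - INR n ^ a * P)
      in *.
    assert (Htel : 2 * sin (y / 2) * ((INR n + 1) ^ a * cos ((INR n + 1) * y + c))
                   = (INR n + 1) ^ a * (Q - P)).
    { unfold P, Q.
      replace ((INR n + 1 + / 2) * y + c) with (((INR n + 1) * y + c) + y / 2) by field.
      replace ((INR n + / 2) * y + c) with (((INR n + 1) * y + c) - y / 2) by field.
      rewrite sin_plus, sin_minus. ring. }
    replace (2 * sin (y / 2) * (sum1 n (fun k => INR k ^ a * cos (INR k * y + c))
               + (INR n + 1) ^ a * cos ((INR n + 1) * y + c)) - (INR n + 1) ^ a * Q)
      with (E - ((INR n + 1) ^ a - INR n ^ a) * P)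
      by (unfold E; rewrite Rmult_plus_distr_l, Htel; ring).
    assert (Hmono : INR n ^ a <= (INR n + 1) ^ a) by (apply pow_incr; pose proof (pos_INR n); lra).
    pose proof (Rabs_sin_le_1 ((INR n + / 2) * y + c)) as HP. fold P in HP.
    eapply Rle_trans; [apply Rabs_triang|].
    rewrite Rabs_Ropp, Rabs_mult, (Rabs_pos_eq (_ - _)) by lra.
    pose proof (Rabs_pos P). nra.
Qed.

Lemma Rabs_sin_half_mul_cos_powsum_le n a y c :
  Rabs (sin (y / 2) * cos_powsum n a y c) <= INR n ^ a.
Proof.
  pose proof (cos_powsum_abel n a y c) as H.
  pose proof (pow_le (INR n) a (pos_INR n)).
  assert (Rabs (INR n ^ a * sin ((INR n + / 2) * y + c)) <= INR n ^ a).
  { rewrite Rabs_mult, (Rabs_pos_eq (INR n ^ a)) by lra.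
    pose proof (Rabs_sin_le_1 ((INR n + / 2) * y + c)). nra. }
  assert (H2 : Rabs (2 * (sin (y / 2) * cos_powsum n a y c)) <= 2 * INR n ^ a).
  { replace (2 * (sin (y / 2) * cos_powsum n a y c))
      with ((2 * sin (y / 2) * cos_powsum n a y c - INR n ^ a * sin ((INR n + / 2) * y + c))
            + INR n ^ a * sin ((INR n + / 2) * y + c)) by ring.
    eapply Rle_trans; [apply Rabs_triang | lra]. }
  rewrite Rabs_mult, (Rabs_pos_eq 2) in H2 by lra. lra.
Qed.

Lemma weighted_cos_powsum_le n a y c sg d D :
  0 <= sg -> sg <= Rabs (sin (y / 2)) + d -> 0 <= d -> d * INR n <= D ->
  sg * Rabs (cos_powsum n a y c) <= (1 + D) * INR n ^ a.
Proof.
  intros Hsg Hsin Hd HD.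
  pose proof (Rabs_sin_half_mul_cos_powsum_le n a y c) as Habel. rewrite Rabs_mult in Habel.
  pose proof (Rabs_cos_powsum_le n a y c). pose proof (Rabs_pos (cos_powsum n a y c)).
  pose proof (pow_le (INR n) a (pos_INR n)).
  assert (sg * Rabs (cos_powsum n a y c)
          <= (Rabs (sin (y / 2)) + d) * Rabs (cos_powsum n a y c))
    by (apply Rmult_le_compat_r; lra).
  assert (d * Rabs (cos_powsum n a y c) <= d * (INR n * INR n ^ a))
    by (apply Rmult_le_compat_l; lra).
  assert (d * INR n * INR n ^ a <= D * INR n ^ a) by (apply Rmult_le_compat_r; lra).
  nra.
Qed.

Lemma weighted_powsum_norm2_le n a y sg d D :
  0 <= sg -> sg <= Rabs (sin (y / 2)) + d -> 0 <= d -> d * INR n <= D ->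
  sg ^ 2 * powsum_norm2 n a y <= 2 * ((1 + D) * INR n ^ a) ^ 2.
Proof.
  intros. unfold powsum_norm2.
  assert (Hc : forall c, (sg * Rabs (cos_powsum n a y c)) ^ 2 <= ((1 + D) * INR n ^ a) ^ 2).
  { intro c. apply pow_incr. split.
    - apply Rmult_le_pos; [lra | apply Rabs_pos].
    - apply (weighted_cos_powsum_le n a y c sg d D); assumption. }
  pose proof (Hc 0) as Hcos. pose proof (Hc (- (PI / 2))) as Hsin.
  rewrite Rpow_mult_distr, pow2_abs in Hcos, Hsin. lra.
Qed.

Lemma cos_bisum_pow_eq n a b y z ph :
  cos_bisum n (fun k l => INR k ^ a * INR l ^ b) y z ph =
  cos ph * (cos_powsum n a y 0 * cos_powsum n b z 0
            + cos_powsum n a y (- (PI / 2)) * cos_powsum n b z (- (PI / 2)))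
  - sin ph * (cos_powsum n a y (- (PI / 2)) * cos_powsum n b z 0
              - cos_powsum n a y 0 * cos_powsum n b z (- (PI / 2))).
Proof.
  assert (Hsin : forall m x k,
            INR k ^ m * cos (INR k * x + - (PI / 2)) = INR k ^ m * sin (INR k * x)).
  { intros. rewrite cos_plus, cos_neg, sin_neg, cos_PI2, sin_PI2. ring. }
  unfold cos_powsum.
  rewrite <- !sum1_mul, <- sum1_plus, <- sum1_minus, <- !sum1_scal, <- sum1_minus.
  apply sum1_ext; intro k.
  rewrite <- sum1_plus, <- sum1_minus, <- !sum1_scal, <- sum1_minus.
  apply sum1_ext; intro l.
  rewrite !Hsin, !Rplus_0_r, cos_plus, cos_minus, sin_minus. ring.
Qed.

Lemma cos_bisum_pow_sq_le n a b y z ph :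
  cos_bisum n (fun k l => INR k ^ a * INR l ^ b) y z ph ^ 2
  <= powsum_norm2 n a y * powsum_norm2 n b z.
Proof.
  rewrite cos_bisum_pow_eq. unfold powsum_norm2.
  set (X := cos_powsum n a y 0 * cos_powsum n b z 0
            + cos_powsum n a y (- (PI / 2)) * cos_powsum n b z (- (PI / 2))).
  set (Y := cos_powsum n a y (- (PI / 2)) * cos_powsum n b z 0
            - cos_powsum n a y 0 * cos_powsum n b z (- (PI / 2))).
  assert (HXY : X ^ 2 + Y ^ 2 =
    (cos_powsum n a y 0 ^ 2 + cos_powsum n a y (- (PI / 2)) ^ 2)
    * (cos_powsum n b z 0 ^ 2 + cos_powsum n b z (- (PI / 2)) ^ 2)) by (unfold X, Y; ring).
  rewrite <- HXY.
  pose proof (sin2_cos2 ph) as Hph. unfold Rsqr in Hph.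
  assert (0 <= (sin ph * X + cos ph * Y) ^ 2) by apply pow2_ge_0.
  assert ((cos ph * X - sin ph * Y) ^ 2 + (sin ph * X + cos ph * Y) ^ 2
          = (sin ph * sin ph + cos ph * cos ph) * (X ^ 2 + Y ^ 2)) by ring.
  rewrite Hph in *. lra.
Qed.

(* AM-GM with a free weight [lam]: this replaces the Cauchy-Schwarz inequality for integrals. *)
Lemma Rabs_cos_bisum_pow_le n a b y z ph lam : 0 < lam ->
  Rabs (cos_bisum n (fun k l => INR k ^ a * INR l ^ b) y z ph)
  <= (lam * powsum_norm2 n a y + powsum_norm2 n b z / lam) / 2.
Proof.
  intros Hlam. pose proof (cos_bisum_pow_sq_le n a b y z ph) as Hsq.
  set (T := cos_bisum _ _ _ _ _) in *.
  set (P := powsum_norm2 n a y) in *. set (Q := powsum_norm2 n b z) in *.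
  assert (0 <= P) by (unfold P, powsum_norm2; nra).
  assert (0 <= Q) by (unfold Q, powsum_norm2; nra).
  assert (0 <= Q / lam) by (apply Rdiv_le_0_compat; lra).
  apply Rsqr_incr_0_var; [rewrite !Rsqr_pow2, pow2_abs | nra].
  assert (((lam * P + Q / lam) / 2) ^ 2 - P * Q = ((lam * P - Q / lam) / 2) ^ 2) by (field; lra).
  pose proof (pow2_ge_0 ((lam * P - Q / lam) / 2)). lra.
Qed.

Lemma weighted_cos_bisum_pow_le n a b y z ph sg da db D :
  0 <= sg -> sg <= Rabs (sin (y / 2)) + da -> sg <= Rabs (sin (z / 2)) + db ->
  0 <= da -> 0 <= db -> da * INR n <= D -> db * INR n <= D ->
  sg ^ 2 * Rabs (cos_bisum n (fun k l => INR k ^ a * INR l ^ b) y z ph)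
  <= 2 * (1 + D) ^ 2 * (INR n ^ a * INR n ^ b).
Proof.
  intros Hsg Hy Hz Hda Hdb HDa HDb.
  pose proof (weighted_powsum_norm2_le n a y sg da D Hsg Hy Hda HDa) as Ha.
  pose proof (weighted_powsum_norm2_le n b z sg db D Hsg Hz Hdb HDb) as Hb.
  pose proof (cos_bisum_pow_sq_le n a b y z ph) as Hsq.
  set (T := cos_bisum _ _ _ _ _) in *.
  assert (0 <= D) by (pose proof (pos_INR n); nra).
  pose proof (pow_le (INR n) a (pos_INR n)). pose proof (pow_le (INR n) b (pos_INR n)).
  assert (0 <= sg ^ 2) by apply pow2_ge_0.
  apply Rsqr_incr_0_var; [rewrite !Rsqr_pow2 | apply Rmult_le_pos; [nra | apply Rmult_le_pos; lra]].
  rewrite Rpow_mult_distr, pow2_abs.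
  apply Rle_trans with ((sg ^ 2 * powsum_norm2 n a y) * (sg ^ 2 * powsum_norm2 n b z)).
  - replace ((sg ^ 2 * powsum_norm2 n a y) * (sg ^ 2 * powsum_norm2 n b z))
      with ((sg ^ 2) ^ 2 * (powsum_norm2 n a y * powsum_norm2 n b z)) by ring.
    apply Rmult_le_compat_l; [apply pow2_ge_0 | exact Hsq].
  - assert (0 <= powsum_norm2 n a y) by (unfold powsum_norm2; nra).
    assert (0 <= powsum_norm2 n b z) by (unfold powsum_norm2; nra).
    apply Rle_trans with ((2 * ((1 + D) * INR n ^ a) ^ 2) * (2 * ((1 + D) * INR n ^ b) ^ 2)).
    + apply Rmult_le_compat; try apply Rmult_le_pos; auto.
    + right. ring.
Qed.

Lemma powsum_norm2_cos_bisum n a y :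
  powsum_norm2 n a y = cos_bisum n (fun k l => INR k ^ a * INR l ^ a) y y 0.
Proof. rewrite cos_bisum_pow_eq, cos_0, sin_0. unfold powsum_norm2. ring. Qed.

Lemma continuous_powsum_norm2_shift n a s x : continuous (fun x => powsum_norm2 n a (s - x)) x.
Proof.
  apply (continuous_ext
           (fun x => cos_bisum n (fun k l => INR k ^ a * INR l ^ a) (s - x) (s - x) 0)).
  - intro; symmetry; apply powsum_norm2_cos_bisum.
  - apply continuous_cos_bisum_shift.
Qed.

Lemma RInt_powsum_norm2_le n a s :
  RInt (fun x => powsum_norm2 n a (s - x)) 0 (2 * PI) <= 2 * PI * (INR n * (INR n ^ a * INR n ^ a)).
Proof.
  rewrite (RInt_ext _ (fun x => cos_bisum n (fun k l => INR k ^ a * INR l ^ a) (s - x) (s - x) 0))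
    by (intros; apply powsum_norm2_cos_bisum).
  rewrite RInt_cos_bisum. pose proof PI_RGT_0.
  apply Rmult_le_compat_l; [lra|]. apply sum1_le_const. intros k Hk.
  rewrite Rminus_diag, Rmult_0_r, Rplus_0_r, cos_0, Rmult_1_r.
  assert (INR k ^ a <= INR n ^ a) by (apply pow_incr; split; [apply pos_INR | apply le_INR; lia]).
  pose proof (pow_le (INR k) a (pos_INR k)). nra.
Qed.

Lemma exists_shift_into_period x : exists j : Z, 0 <= x - 2 * PI * IZR j <= 2 * PI.
Proof.
  pose proof PI_RGT_0.
  destruct (archimed (x / (2 * PI))) as [H1 H2].
  exists (up (x / (2 * PI)) - 1)%Z. rewrite minus_IZR.
  assert (x = x / (2 * PI) * (2 * PI)) by (field; lra).
  split; nra.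
Qed.

Lemma periodic_shift_Z (f : R -> R) (j : Z) x :
  (forall x, f (x + 2 * PI) = f x) -> f (x - 2 * PI * IZR j) = f x.
Proof.
  intros f_periodic.
  assert (Hnat : forall (m : nat) x, f (x + 2 * PI * INR m) = f x).
  { induction m as [|m IH]; intro y.
    - simpl. rewrite Rmult_0_r, Rplus_0_r. reflexivity.
    - replace (y + 2 * PI * INR (S m)) with ((y + 2 * PI * INR m) + 2 * PI)
        by (rewrite S_INR; ring).
      rewrite f_periodic. apply IH. }
  destruct (Z_le_gt_dec 0 j) as [Hj|Hj].
  - rewrite <- (Hnat (Z.to_nat j)), INR_IZR_INZ, Z2Nat.id by exact Hj. f_equal. ring.
  - rewrite <- (Z.opp_involutive j), <- (Z2Nat.id (- j)) by lia.
    rewrite opp_IZR, <- INR_IZR_INZ, <- (Hnat (Z.to_nat (- j)) x). f_equal. ring.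
Qed.

Lemma sin_sq_half_shift d (k : Z) : sin ((d + 2 * PI * IZR k) / 2) ^ 2 = sin (d / 2) ^ 2.
Proof.
  assert (Hsq : forall t, sin (t / 2) ^ 2 = (1 - cos t) / 2).
  { intro t. replace (cos t) with (cos (2 * (t / 2))) by (f_equal; field).
    rewrite cos_2a_sin. field. }
  rewrite !Hsq.
  replace (d + 2 * PI * IZR k) with (d - 2 * PI * IZR (- k)) by (rewrite opp_IZR; ring).
  rewrite periodic_shift_Z; [reflexivity|].
  intro x. rewrite cos_plus, cos_2PI, sin_2PI. ring.
Qed.

Lemma sin_sq_half_lt_near_period x delta : 0 < delta <= PI ->
  sin (x / 2) ^ 2 < sin (delta / 2) ^ 2 -> exists k : Z, Rabs (x - 2 * PI * IZR k) < delta.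
Proof.
  intros Hdelta Hsin. pose proof PI_RGT_0.
  destruct (exists_shift_into_period (x + PI)) as [k Hk].
  exists k. set (d := x - 2 * PI * IZR k) in *.
  destruct (Rlt_le_dec (Rabs d) delta) as [|Hge]; [assumption | exfalso].
  assert (Hd : Rabs d <= PI) by (apply Rabs_le; unfold d; lra).
  assert (Hmono : sin (delta / 2) <= sin (Rabs d / 2)).
  { apply sin_incr_1; lra. }
  assert (Habs : sin (Rabs d / 2) ^ 2 = sin (x / 2) ^ 2).
  { transitivity (sin (d / 2) ^ 2).
    - destruct (Rle_lt_dec 0 d).
      + rewrite Rabs_pos_eq by lra. reflexivity.
      + rewrite Rabs_left by lra. replace (- d / 2) with (- (d / 2)) by field.
        rewrite sin_neg. ring.
    - rewrite <- (sin_sq_half_shift d k). unfold d. do 3 f_equal. ring. }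
  assert (0 < sin (delta / 2)) by (apply sin_gt_0; lra).
  assert (sin (delta / 2) ^ 2 <= sin (Rabs d / 2) ^ 2) by (apply pow_incr; lra).
  lra.
Qed.

Section Periodic.

Variable f : R -> R.
Hypothesis f_cont : forall x, continuous f x.
Hypothesis f_periodic : forall x, f (x + 2 * PI) = f x.

Lemma periodic_bounded : exists B, forall x, Rabs (f x) <= B.
Proof.
  pose proof PI_RGT_0.
  destruct (continuity_ab_maj (fun x => Rabs (f x)) 0 (2 * PI)) as [xmax [Hmax _]]; [lra| |].
  - intros c _. apply (continuity_pt_comp f Rabs), Rcontinuity_abs.
    apply continuity_pt_filterlim, f_cont.
  - exists (Rabs (f xmax)). intro x. destruct (exists_shift_into_period x) as [j Hj].
    rewrite <- (periodic_shift_Z f j x f_periodic). apply Hmax, Hj.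
Qed.

Lemma periodic_uniform_continuity e : 0 < e ->
  exists delta, 0 < delta <= PI /\
  forall x y, Rabs (x - y) < delta -> Rabs (f x - f y) < e.
Proof.
  intros He. pose proof PI_RGT_0.
  assert (HU : uniform_continuity f (fun c => - PI <= c <= 3 * PI)).
  { apply Heine; [apply compact_P3|]. intros. apply continuity_pt_filterlim, f_cont. }
  destruct (HU (mkposreal e He)) as [[dl Hdl] HUdl]; simpl in HUdl.
  exists (Rmin dl PI). split; [split; [apply Rmin_glb_lt | apply Rmin_r]; lra|].
  intros x y Hxy. pose proof (Rmin_l dl PI). pose proof (Rmin_r dl PI).
  destruct (exists_shift_into_period y) as [j Hj].
  rewrite <- (periodic_shift_Z f j x f_periodic), <- (periodic_shift_Z f j y f_periodic).
  apply Rabs_def2 in Hxy.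
  apply HUdl; [lra | lra |].
  replace (x - 2 * PI * IZR j - (y - 2 * PI * IZR j)) with (x - y) by ring.
  apply Rabs_def1; lra.
Qed.

Lemma periodic_oscillation_le e : 0 < e ->
  exists K, 0 <= K /\ forall x s, Rabs (f x - f s) <= e + K * sin ((x - s) / 2) ^ 2.
Proof.
  intros He.
  destruct periodic_bounded as [B HB].
  destruct (periodic_uniform_continuity e He) as [delta [Hdelta Hunif]].
  set (c := sin (delta / 2) ^ 2).
  assert (Hc : 0 < c) by (apply pow_lt, sin_gt_0; lra).
  exists (2 * B / c). split.
  { pose proof (HB 0). pose proof (Rabs_pos (f 0)). apply Rdiv_le_0_compat; lra. }
  intros x s.
  assert (0 <= 2 * B / c * sin ((x - s) / 2) ^ 2).
  { pose proof (HB 0). pose proof (Rabs_pos (f 0)).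
    apply Rmult_le_pos; [apply Rdiv_le_0_compat; lra | apply pow2_ge_0]. }
  destruct (Rlt_le_dec (sin ((x - s) / 2) ^ 2) c) as [Hnear|Hfar].
  - destruct (sin_sq_half_lt_near_period (x - s) delta Hdelta Hnear) as [k Hk].
    rewrite <- (periodic_shift_Z f k x f_periodic).
    assert (Rabs (f (x - 2 * PI * IZR k) - f s) < e)
      by (apply Hunif; replace (x - 2 * PI * IZR k - s) with (x - s - 2 * PI * IZR k) by ring;
          exact Hk).
    lra.
  - assert (Rabs (f x - f s) <= 2 * B).
    { unfold Rminus. eapply Rle_trans; [apply Rabs_triang|]. rewrite Rabs_Ropp.
      pose proof (HB x). pose proof (HB s). lra. }
    assert (2 * B <= 2 * B / c * sin ((x - s) / 2) ^ 2).
    { apply (Rmult_le_reg_r c); [exact Hc|].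
      replace (2 * B / c * sin ((x - s) / 2) ^ 2 * c) with (2 * B * sin ((x - s) / 2) ^ 2)
        by (field; lra).
      pose proof (HB 0). pose proof (Rabs_pos (f 0)). nra. }
    lra.
Qed.

End Periodic.

(** * Riemann sums and the derivatives of sinc *)

Definition moment_integrand m c w (t : R) := t ^ m * cos (t * w + c).

Definition cos_moment m c w := RInt (moment_integrand m c w) 0 1.

Lemma continuous_moment_integrand m c w t : continuous (moment_integrand m c w) t.
Proof.
  apply (@ex_derive_continuous R_AbsRing R_NormedModule). unfold moment_integrand.
  auto_derive. exact I.
Qed.

Lemma moment_integrand_lipschitz m c w t1 t2 : 0 <= t1 <= 1 -> 0 <= t2 <= 1 ->
  Rabs (moment_integrand m c w t1 - moment_integrand m c w t2) <= (INR m + Rabs w) * Rabs (t1 - t2).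
Proof.
  intros H1 H2.
  destruct (MVT_gen (moment_integrand m c w) t2 t1
              (fun x => INR m * x ^ pred m * cos (x * w + c) + x ^ m * (w * - sin (x * w + c))))
    as [x [Hx ->]].
  - intros x _. unfold moment_integrand. auto_derive; [exact I | ring].
  - intros. apply continuity_pt_filterlim, continuous_moment_integrand.
  - rewrite Rabs_mult. apply Rmult_le_compat_r; [apply Rabs_pos|].
    assert (Hx01 : 0 <= x <= 1).
    { split; [apply Rle_trans with (Rmin t2 t1); [apply Rmin_glb; lra | apply Hx]|
              apply Rle_trans with (Rmax t2 t1); [apply Hx | apply Rmax_lub; lra]]. }
    assert (Hpow : forall k, 0 <= x ^ k <= 1).
    { intro k. split; [apply pow_le; lra | rewrite <- (pow1 k); apply pow_incr; lra]. }
    pose proof (Hpow (pred m)). pose proof (Hpow m). pose proof (pos_INR m).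
    pose proof (Rabs_cos_le_1 (x * w + c)). pose proof (Rabs_sin_le_1 (x * w + c)).
    pose proof (Rabs_pos w). pose proof (Rabs_pos (cos (x * w + c))).
    pose proof (Rabs_pos (sin (x * w + c))).
    eapply Rle_trans; [apply Rabs_triang|]. rewrite !Rabs_mult, Rabs_Ropp.
    rewrite (Rabs_pos_eq (INR m)), (Rabs_pos_eq (x ^ pred m)), (Rabs_pos_eq (x ^ m)) by lra.
    assert (x ^ pred m * Rabs (cos (x * w + c)) <= 1) by nra.
    assert (x ^ m * Rabs (sin (x * w + c)) <= 1) by nra.
    nra.
Qed.

Lemma RInt_right_rectangle_le (g : R -> R) a b L : a <= b -> ex_RInt g a b ->
  (forall t, a <= t <= b -> Rabs (g t - g b) <= L) ->
  Rabs (RInt g a b - (b - a) * g b) <= (b - a) * L.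
Proof.
  intros Hab Hg HL.
  replace (RInt g a b - (b - a) * g b) with (RInt (fun t => g t - g b) a b).
  - apply abs_RInt_le_const; [exact Hab | | exact HL].
    apply (ex_RInt_minus g (fun _ => g b)); [exact Hg | apply ex_RInt_const].
  - rewrite (RInt_minus g (fun _ => g b)); [| exact Hg | apply ex_RInt_const].
    rewrite RInt_const. reflexivity.
Qed.

Lemma RInt_sum1_cells (g : R -> R) n j : (forall a b, ex_RInt g a b) ->
  RInt g 0 (INR j / INR n) = sum1 j (fun k => RInt g ((INR k - 1) / INR n) (INR k / INR n)).
Proof.
  intros Hex. induction j as [|j IH]; cbn [sum1].
  - rewrite Rdiv_0_l, RInt_point. reflexivity.
  - rewrite <- IH, S_INR, Rplus_minus_r. symmetry. apply (RInt_Chasles g); apply Hex.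
Qed.

Lemma riemann_sum_cos_moment m c w n : (0 < n)%nat ->
  Rabs (sum1 n (fun k => INR k ^ m * cos (INR k * (w / INR n) + c)) / INR n ^ (m + 1)
        - cos_moment m c w)
  <= (INR m + Rabs w) / INR n.
Proof.
  intros Hn. assert (HN : 0 < INR n) by (apply lt_0_INR; lia).
  set (g := moment_integrand m c w). set (L := INR m + Rabs w).
  assert (HL : 0 <= L) by (unfold L; pose proof (pos_INR m); pose proof (Rabs_pos w); lra).
  assert (Hex : forall a b, ex_RInt g a b)
    by (intros; apply ex_RInt_continuous_R, continuous_moment_integrand).
  assert (Hsum : sum1 n (fun k => INR k ^ m * cos (INR k * (w / INR n) + c)) / INR n ^ (m + 1)
                 = sum1 n (fun k => / INR n * g (INR k / INR n))).
  { unfold Rdiv at 1. rewrite Rmult_comm, <- sum1_scal. apply sum1_ext; intro k.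
    unfold g, moment_integrand, Rdiv. rewrite pow_add, Rpow_mult_distr, pow_inv.
    replace (INR k * / INR n * w + c) with (INR k * (w * / INR n) + c) by ring.
    simpl pow. field. split; [apply pow_nonzero|]; lra. }
  unfold cos_moment. fold g.
  replace 1 with (INR n / INR n) by (field; lra).
  rewrite (RInt_sum1_cells g n n Hex), Hsum, Rabs_minus_sym, <- sum1_minus.
  eapply Rle_trans; [apply Rabs_sum1_le|].
  replace (L / INR n) with (INR n * (/ INR n * (L / INR n))) by (field; lra).
  apply sum1_le_const. intros k Hk.
  assert (Hk1 : 1 <= INR k <= INR n) by (split; [apply (le_INR 1) | apply le_INR]; lia).
  assert (Hcell : INR k / INR n - (INR k - 1) / INR n = / INR n) by (field; lra).
  assert (0 < / INR n) by (apply Rinv_0_lt_compat; lra).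
  assert (0 <= (INR k - 1) / INR n) by (apply Rdiv_le_0_compat; lra).
  assert (INR k / INR n <= 1).
  { unfold Rdiv. rewrite <- (Rinv_r (INR n)) by lra.
    apply Rmult_le_compat_r; [left; apply Rinv_0_lt_compat |]; lra. }
  rewrite <- Hcell.
  apply RInt_right_rectangle_le; [lra | apply Hex |].
  intros t Ht.
  eapply Rle_trans; [apply moment_integrand_lipschitz; lra|].
  unfold Rdiv at 2. apply Rmult_le_compat_l; [exact HL|].
  rewrite Rabs_left1 by lra. lra.
Qed.

Lemma sinc_cos_moment w : sinc w = cos_moment 0 0 w.
Proof.
  unfold sinc, cos_moment, moment_integrand. destruct (Req_EM_T w 0) as [->|Hw].
  - rewrite (RInt_ext _ (fun _ => 1)).
    + rewrite RInt_const. unfold scal; simpl; unfold mult; simpl. ring.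
    + intros x _. rewrite Rmult_0_r, Rplus_0_r, cos_0. simpl. ring.
  - rewrite (is_RInt_unique _ 0 1 (minus (sin (1 * w) / w) (sin (0 * w) / w))).
    + unfold minus, plus, opp; simpl. rewrite Rmult_0_l, sin_0, Rmult_1_l. field. exact Hw.
    + apply (is_RInt_derive (fun t => sin (t * w) / w)).
      * intros x _. auto_derive; [exact I|]. rewrite Rplus_0_r. simpl. field. exact Hw.
      * intros x _. apply (continuous_moment_integrand 0 0 w).
Qed.

Lemma is_derive_cos_moment m c w :
  is_derive (cos_moment m c) w (cos_moment (S m) (c + PI / 2) w).
Proof.
  assert (HD : forall t u,
            is_derive (fun z => moment_integrand m c z t) u (- (t ^ S m * sin (t * u + c)))).
  { intros t u. unfold moment_integrand. auto_derive; [exact I|]. simpl. ring. }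
  replace (cos_moment (S m) (c + PI / 2) w)
    with (RInt (fun t => Derive (fun u => moment_integrand m c u t) w) 0 1).
  - apply (is_derive_RInt_param (fun x t => moment_integrand m c x t)).
    + apply filter_forall. intros x t _. eexists. apply HD.
    + intros t _. apply continuity_2d_pt_ext with (fun u v => - (v ^ S m * sin (v * u + c))).
      * intros u v. symmetry. apply is_derive_unique, HD.
      * apply continuity_2d_pt_opp, continuity_2d_pt_mult.
        -- apply (continuity_1d_2d_pt_comp (fun v => v ^ S m) (fun _ v => v)).
           ++ apply derivable_continuous_pt, derivable_pt_pow.
           ++ apply continuity_2d_pt_id2.
        -- apply (continuity_1d_2d_pt_comp sin (fun u v => v * u + c)); [apply continuity_sin|].
           apply continuity_2d_pt_plus; [|apply continuity_2d_pt_const].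
           apply continuity_2d_pt_mult; [apply continuity_2d_pt_id2 | apply continuity_2d_pt_id1].
    + apply filter_forall. intro x. apply ex_RInt_continuous_R, continuous_moment_integrand.
  - apply RInt_ext. intros t _.
    replace (Derive (fun u => moment_integrand m c u t) w) with (- (t ^ S m * sin (t * w + c)))
      by (symmetry; apply is_derive_unique, HD).
    unfold moment_integrand.
    replace (t * w + (c + PI / 2)) with ((t * w + c) + PI / 2) by ring.
    rewrite cos_plus, cos_PI2, sin_PI2. simpl. ring.
Qed.

Lemma Derive_n_sinc m w : Derive_n sinc m w = cos_moment m (INR m * (PI / 2)) w.
Proof.
  revert w; induction m as [|m IH]; intro w; simpl Derive_n.
  - rewrite sinc_cos_moment, Rmult_0_l. reflexivity.
  - rewrite (Derive_ext _ _ _ IH), (is_derive_unique _ _ _ (is_derive_cos_moment _ _ _)).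
    f_equal. rewrite S_INR. ring.
Qed.

Lemma sign_mul_Derive_n_sinc a b w :
  (-1) ^ b * Derive_n sinc (a + b) w = cos_moment (a + b) (INR a * (PI / 2) - INR b * (PI / 2)) w.
Proof.
  assert (Hsign : forall x, (-1) ^ b * cos (x + INR b * PI) = cos x).
  { clear. induction b as [|b IH]; intro x.
    - simpl. rewrite Rmult_0_l, Rplus_0_r. ring.
    - rewrite S_INR, Rmult_plus_distr_r, Rmult_1_l, <- Rplus_assoc, neg_cos.
      simpl pow. rewrite <- (IH x). ring. }
  rewrite Derive_n_sinc. unfold cos_moment.
  rewrite <- RInt_scal_R by apply ex_RInt_continuous_R, continuous_moment_integrand.
  apply RInt_ext. intros t _. unfold moment_integrand.
  rewrite <- (Hsign (t * w + (INR a * (PI / 2) - INR b * (PI / 2)))), plus_INR.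
  replace (t * w + (INR a * (PI / 2) - INR b * (PI / 2)) + INR b * PI)
    with (t * w + (INR a + INR b) * (PI / 2)) by field.
  simpl. ring.
Qed.

(** * Localisation of the spectral integral *)

Definition deriv_kernel n a b s t x :=
  cos_bisum n (fun k l => INR k ^ a * INR l ^ b) (s - x) (t - x)
    (INR a * (PI / 2) - INR b * (PI / 2)).

Lemma continuous_deriv_kernel n a b s t x : continuous (deriv_kernel n a b s t) x.
Proof. apply continuous_cos_bisum_shift. Qed.

Lemma scaled_rn_deriv_eq rho psi n a b s t : spectral_density rho psi -> (0 < n)%nat ->
  / INR n ^ (a + b) * rn_deriv rho n a b s t =
  RInt (fun x => psi x * deriv_kernel n a b s t x) 0 (2 * PI) / (2 * PI * INR n ^ (a + b + 1)).
Proof.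
  intros Hs Hn. assert (0 < INR n) by (apply lt_0_INR; lia). pose proof PI_RGT_0.
  unfold deriv_kernel. rewrite rn_deriv_cos_bisum, (RInt_psi_cos_bisum rho psi _ _ _ _ _ Hs).
  rewrite !pow_add. simpl pow. field. repeat split; try apply pow_nonzero; lra.
Qed.

Lemma scaled_RInt_deriv_kernel n a b s t : (0 < n)%nat ->
  RInt (deriv_kernel n a b s t) 0 (2 * PI) / (2 * PI * INR n ^ (a + b + 1)) =
  sum1 n (fun k => INR k ^ (a + b) * cos (INR k * (s - t) + (INR a * (PI / 2) - INR b * (PI / 2))))
  / INR n ^ (a + b + 1).
Proof.
  intros Hn. assert (0 < INR n) by (apply lt_0_INR; lia). pose proof PI_RGT_0.
  unfold deriv_kernel. rewrite RInt_cos_bisum.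
  rewrite (sum1_ext _ _ (fun k => INR k ^ (a + b)
                                   * cos (INR k * (s - t) + (INR a * (PI / 2) - INR b * (PI / 2)))))
    by (intro; rewrite pow_add; ring).
  field. split; [apply pow_nonzero | ]; lra.
Qed.

Lemma Rabs_sin_half_sub_le s x w :
  Rabs (sin ((x - s) / 2)) <= Rabs (sin ((s + w - x) / 2)) + Rabs w / 2.
Proof.
  replace ((x - s) / 2) with (w / 2 - (s + w - x) / 2) by field.
  eapply Rle_trans; [apply Rabs_sin_sub_le|].
  pose proof (Rabs_sin_le (w / 2)).
  replace (Rabs (w / 2)) with (Rabs w / 2) in *
    by (unfold Rdiv; rewrite Rabs_mult, Rabs_inv, (Rabs_pos_eq 2) by lra; ring).
  lra.
Qed.

(* The weight [n^b / n^a] in this AM-GM bound balances the integrals of the two terms. *)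
Definition kernel_majorant n a b y z e W x :=
  e * ((INR n ^ b / INR n ^ a * powsum_norm2 n a (y - x)
        + powsum_norm2 n b (z - x) / (INR n ^ b / INR n ^ a)) / 2) + W.

Lemma continuous_kernel_majorant n a b y z e W x : continuous (kernel_majorant n a b y z e W) x.
Proof.
  unfold kernel_majorant. set (lam := INR n ^ b / INR n ^ a).
  apply (continuous_plus _ (fun _ => W)); [|apply continuous_const].
  apply (continuous_mult (fun _ => e)); [apply continuous_const|].
  apply (continuous_mult _ (fun _ => / 2)); [|apply continuous_const].
  apply (continuous_plus (fun x => lam * powsum_norm2 n a (y - x))
                         (fun x => powsum_norm2 n b (z - x) / lam)).
  - apply (continuous_mult (fun _ => lam)); [apply continuous_const|].
    apply continuous_powsum_norm2_shift.
  - apply (continuous_mult _ (fun _ => / lam)); [|apply continuous_const].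
    apply continuous_powsum_norm2_shift.
Qed.

Lemma deriv_kernel_pointwise_le n a b s u v x d e K M :
  (0 < n)%nat -> 0 <= e -> 0 <= K -> Rabs u <= M -> Rabs v <= M ->
  Rabs d <= e + K * sin ((x - s) / 2) ^ 2 ->
  Rabs (d * deriv_kernel n a b (s + u / INR n) (s + v / INR n) x)
  <= kernel_majorant n a b (s + u / INR n) (s + v / INR n) e
       (K * (2 * (1 + M / 2) ^ 2 * (INR n ^ a * INR n ^ b))) x.
Proof.
  intros Hn He HK Hu Hv Hd. assert (HN : 0 < INR n) by (apply lt_0_INR; lia).
  unfold deriv_kernel, kernel_majorant. set (T := cos_bisum _ _ _ _ _).
  set (sg := Rabs (sin ((x - s) / 2))).
  assert (Hsg : sin ((x - s) / 2) ^ 2 = sg ^ 2) by (unfold sg; rewrite pow2_abs; reflexivity).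
  assert (Hshift : forall w, Rabs w <= M -> Rabs (w / INR n) / 2 * INR n <= M / 2).
  { intros w Hw. unfold Rdiv. rewrite Rabs_mult, Rabs_inv, (Rabs_pos_eq (INR n)) by lra.
    replace (Rabs w * / INR n * / 2 * INR n) with (Rabs w / 2) by (field; lra). lra. }
  assert (Hweight : sg ^ 2 * Rabs T <= 2 * (1 + M / 2) ^ 2 * (INR n ^ a * INR n ^ b)).
  { apply (weighted_cos_bisum_pow_le _ _ _ _ _ _ _ (Rabs (u / INR n) / 2) (Rabs (v / INR n) / 2));
      try apply Hshift; auto.
    - apply Rabs_pos.
    - apply Rabs_sin_half_sub_le.
    - apply Rabs_sin_half_sub_le.
    - pose proof (Rabs_pos (u / INR n)). lra.
    - pose proof (Rabs_pos (v / INR n)). lra. }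
  assert (Hamgm := Rabs_cos_bisum_pow_le n a b (s + u / INR n - x) (s + v / INR n - x)
                     (INR a * (PI / 2) - INR b * (PI / 2)) (INR n ^ b / INR n ^ a)).
  fold T in Hamgm. specialize (Hamgm ltac:(apply Rdiv_lt_0_compat; apply pow_lt; lra)).
  rewrite Rabs_mult, Hsg in *. pose proof (Rabs_pos T). pose proof (Rabs_pos d).
  apply Rle_trans with ((e + K * sg ^ 2) * Rabs T); [apply Rmult_le_compat_r; lra|].
  pose proof (Rmult_le_compat_l e _ _ He Hamgm).
  pose proof (Rmult_le_compat_l K _ _ HK Hweight).
  nra.
Qed.

Lemma RInt_kernel_majorant_le n a b y z e W : (0 < n)%nat -> 0 <= e ->
  RInt (kernel_majorant n a b y z e W) 0 (2 * PI) <= 2 * PI * (e * INR n ^ (a + b + 1) + W).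
Proof.
  intros Hn He. assert (HN : 0 < INR n) by (apply lt_0_INR; lia). pose proof PI_RGT_0.
  set (lam := INR n ^ b / INR n ^ a).
  assert (Hlam : 0 < lam) by (apply Rdiv_lt_0_compat; apply pow_lt; lra).
  set (P := fun x => powsum_norm2 n a (y - x)). set (Q := fun x => powsum_norm2 n b (z - x)).
  assert (HP : ex_RInt P 0 (2 * PI))
    by (apply ex_RInt_continuous_R; intro; apply continuous_powsum_norm2_shift).
  assert (HQ : ex_RInt Q 0 (2 * PI))
    by (apply ex_RInt_continuous_R; intro; apply continuous_powsum_norm2_shift).
  rewrite (RInt_ext _ (fun x => ((e * lam / 2) * P x + (e / (2 * lam)) * Q x) + W))
    by (intros; unfold kernel_majorant, P, Q, lam; simpl; field; split; apply pow_nonzero; lra).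
  rewrite (RInt_plus (fun x => (e * lam / 2) * P x + (e / (2 * lam)) * Q x) (fun _ => W)).
  - rewrite RInt_lin_comb, RInt_const by assumption.
    pose proof (RInt_powsum_norm2_le n a y) as HintP.
    pose proof (RInt_powsum_norm2_le n b z) as HintQ.
    assert (0 <= e * lam / 2) by (apply Rdiv_le_0_compat; nra).
    assert (0 <= e / (2 * lam)) by (apply Rdiv_le_0_compat; lra).
    apply Rle_trans with (e * lam / 2 * (2 * PI * (INR n * (INR n ^ a * INR n ^ a)))
                          + e / (2 * lam) * (2 * PI * (INR n * (INR n ^ b * INR n ^ b)))
                          + scal (2 * PI - 0) W).
    + apply Rplus_le_compat_r, Rplus_le_compat; apply Rmult_le_compat_l; assumption.
    + right. unfold scal; simpl; unfold mult; simpl. unfold lam.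
      rewrite !pow_add. simpl pow. field. repeat split; try apply pow_nonzero; lra.
  - apply (ex_RInt_plus (fun x => (e * lam / 2) * P x) (fun x => (e / (2 * lam)) * Q x)).
    + apply (ex_RInt_scal P), HP.
    + apply (ex_RInt_scal Q), HQ.
  - apply ex_RInt_const.
Qed.

Lemma deriv_kernel_localization (f : R -> R) a b M e :
  (forall x, continuous f x) -> (forall x, f (x + 2 * PI) = f x) -> 0 < e ->
  exists C, forall n s u v, (0 < n)%nat -> Rabs u <= M -> Rabs v <= M ->
  Rabs (RInt (fun x => (f x - f s) * deriv_kernel n a b (s + u / INR n) (s + v / INR n) x)
             0 (2 * PI))
  <= 2 * PI * INR n ^ (a + b + 1) * (e + C / INR n).
Proof.
  intros Hcont Hper He.
  destruct (periodic_oscillation_le f Hcont Hper e He) as [K [HK Hosc]].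
  exists (2 * K * (1 + M / 2) ^ 2). intros n s u v Hn Hu Hv.
  assert (HN : 0 < INR n) by (apply lt_0_INR; lia). pose proof PI_RGT_0.
  set (W := K * (2 * (1 + M / 2) ^ 2 * (INR n ^ a * INR n ^ b))).
  set (g := fun x => (f x - f s) * deriv_kernel n a b (s + u / INR n) (s + v / INR n) x).
  assert (Hg : forall x, continuous g x).
  { intro x. apply (continuous_mult (fun x => f x - f s)); [|apply continuous_deriv_kernel].
    apply (continuous_minus f (fun _ => f s)); [apply Hcont | apply continuous_const]. }
  eapply Rle_trans; [apply abs_RInt_le; [lra | apply ex_RInt_continuous_R, Hg]|].
  eapply Rle_trans;
    [apply (RInt_le _ (kernel_majorant n a b (s + u / INR n) (s + v / INR n) e W))|].
  - lra.
  - apply (ex_RInt_norm g), ex_RInt_continuous_R, Hg.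
  - apply ex_RInt_continuous_R, continuous_kernel_majorant.
  - intros x _. apply deriv_kernel_pointwise_le; auto; lra.
  - eapply Rle_trans; [apply RInt_kernel_majorant_le; [exact Hn | lra]|].
    right. unfold W. rewrite !pow_add. simpl pow. field. lra.
Qed.

Lemma deriv_kernel_riemann_le n a b s u v M : (0 < n)%nat -> Rabs u <= M -> Rabs v <= M ->
  Rabs (RInt (deriv_kernel n a b (s + u / INR n) (s + v / INR n)) 0 (2 * PI)
          / (2 * PI * INR n ^ (a + b + 1))
        - cos_moment (a + b) (INR a * (PI / 2) - INR b * (PI / 2)) (u - v))
  <= (INR (a + b) + 2 * M) / INR n.
Proof.
  intros Hn Hu Hv. assert (0 < INR n) by (apply lt_0_INR; lia).
  rewrite scaled_RInt_deriv_kernel by exact Hn.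
  replace (s + u / INR n - (s + v / INR n)) with ((u - v) / INR n) by (field; lra).
  eapply Rle_trans; [apply riemann_sum_cos_moment; exact Hn|].
  apply Rmult_le_compat_r; [left; apply Rinv_0_lt_compat; lra|].
  pose proof (Rabs_triang u (- v)). rewrite Rabs_Ropp in *. unfold Rminus. lra.
Qed.

Lemma scaled_rn_deriv_error rho psi a b M e : spectral_density rho psi -> 0 < e ->
  exists C, forall n s u v, (0 < n)%nat -> Rabs u <= M -> Rabs v <= M ->
  Rabs (/ INR n ^ (a + b) * rn_deriv rho n a b (s + u / INR n) (s + v / INR n)
        - psi s * (-1) ^ b * Derive_n sinc (a + b) (u - v)) <= e + C / INR n.
Proof.
  intros Hs He. pose proof Hs as [Hcont [Hper [Hpos _]]].
  destruct (deriv_kernel_localization psi a b M e Hcont Hper He) as [C1 Hloc].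
  destruct (periodic_bounded psi Hcont Hper) as [B HB].
  exists (C1 + B * (INR (a + b) + 2 * M)). intros n s u v Hn Hu Hv.
  assert (HN : 0 < INR n) by (apply lt_0_INR; lia). pose proof PI_RGT_0.
  set (s' := s + u / INR n). set (t' := s + v / INR n).
  set (Z := 2 * PI * INR n ^ (a + b + 1)).
  assert (HZ : 0 < Z) by (apply Rmult_lt_0_compat; [lra | apply pow_lt; lra]).
  set (I0 := RInt (deriv_kernel n a b s' t') 0 (2 * PI)).
  set (I1 := RInt (fun x => psi x * deriv_kernel n a b s' t' x) 0 (2 * PI)).
  set (G := cos_moment (a + b) (INR a * (PI / 2) - INR b * (PI / 2)) (u - v)).
  assert (Hlin : I1 - psi s * I0
                 = RInt (fun x => (psi x - psi s) * deriv_kernel n a b s' t' x) 0 (2 * PI)).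
  { rewrite (RInt_ext _ (fun x => 1 * (psi x * deriv_kernel n a b s' t' x)
                                  + (- psi s) * deriv_kernel n a b s' t' x))
      by (intros; simpl; ring).
    rewrite RInt_lin_comb; [unfold I0, I1; ring | |].
    - apply ex_RInt_continuous_R. intro x.
      apply (continuous_mult psi); [apply Hcont | apply continuous_deriv_kernel].
    - apply ex_RInt_continuous_R, continuous_deriv_kernel. }
  assert (Hlocal : Rabs (I1 - psi s * I0) / Z <= e + C1 / INR n).
  { apply (Rmult_le_reg_r Z); [exact HZ|]. unfold Rdiv at 1.
    rewrite Rmult_assoc, Rinv_l, Rmult_1_r, (Rmult_comm _ Z), Hlin by lra. apply Hloc; assumption. }
  assert (Hriemann : psi s * Rabs (I0 / Z - G) <= B * ((INR (a + b) + 2 * M) / INR n)).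
  { pose proof (deriv_kernel_riemann_le n a b s u v M Hn Hu Hv) as HR. fold s' t' I0 Z G in HR.
    pose proof (Rle_abs (psi s)). pose proof (HB s). pose proof (Hpos s).
    apply Rmult_le_compat; try lra. apply Rabs_pos. }
  rewrite (scaled_rn_deriv_eq rho psi), (Rmult_assoc (psi s)), sign_mul_Derive_n_sinc by assumption.
  fold s' t' I1 Z G.
  replace (I1 / Z - psi s * G) with ((I1 - psi s * I0) / Z + psi s * (I0 / Z - G)) by (field; lra).
  eapply Rle_trans; [apply Rabs_triang|].
  rewrite Rabs_div, Rabs_mult, (Rabs_pos_eq Z), (Rabs_pos_eq (psi s))
    by (try apply Rlt_le, Hpos; lra).
  replace ((C1 + B * (INR (a + b) + 2 * M)) / INR n)
    with (C1 / INR n + B * ((INR (a + b) + 2 * M) / INR n)) by (field; lra).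
  lra.
Qed.

Lemma eventually_div_lt C e : 0 < e ->
  exists N, (0 < N)%nat /\ forall n, (N <= n)%nat -> C / INR n < e.
Proof.
  intros He. pose proof (Rabs_pos C).
  destruct (archimed_cor1 (e / (Rabs C + 1))) as [N [HN HN0]];
    [apply Rdiv_lt_0_compat; lra|].
  exists N. split; [exact HN0|]. intros n Hn.
  assert (HNpos : 0 < INR N) by (apply lt_0_INR; exact HN0).
  assert (HNn : INR N <= INR n) by (apply le_INR; exact Hn).
  assert (Hinv : / INR n <= / INR N) by (apply Rinv_le_contravar; assumption).
  assert (0 < / INR n) by (apply Rinv_0_lt_compat; lra).
  apply Rle_lt_trans with ((Rabs C + 1) * / INR N).
  - unfold Rdiv. pose proof (Rle_abs C). nra.
  - apply (Rmult_lt_reg_r (/ (Rabs C + 1))); [apply Rinv_0_lt_compat; lra|].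
    replace ((Rabs C + 1) * / INR N * / (Rabs C + 1)) with (/ INR N) by (field; lra).
    exact HN.
Qed.

Theorem lemma2 (rho : Z -> R) (psi : R -> R) (a b : nat) :
  spectral_density rho psi ->
  (a <= 4)%nat -> (b <= 4)%nat ->
  forall M eps : R, 0 < eps ->
  exists N : nat, forall n : nat, (N <= n)%nat ->
  forall s u v : R, Rabs u <= M -> Rabs v <= M ->
  Rabs (/ (INR n ^ (a + b)) * rn_deriv rho n a b (s + u / INR n) (s + v / INR n)
        - psi s * (-1) ^ b * Derive_n sinc (a + b) (u - v)) < eps.
Proof.
  intros Hs _ _ M eps Heps.
  destruct (scaled_rn_deriv_error rho psi a b M (eps / 2) Hs) as [C HC]; [lra|].
  destruct (eventually_div_lt C (eps / 2)) as [N [HN0 HN]]; [lra|].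
  exists N. intros n Hn s u v Hu Hv.
  eapply Rle_lt_trans; [apply HC; auto; lia|].
  specialize (HN n Hn). lra.
Qed.
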